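(* Let $s>1$. Let $z\in H$ with $\operatorname{Im} z<1$ be such that no element of $\Gamma_l$ maps $z$ into $\{w\in H:\operatorname{Im} w>1\}$. Then for all $t$, $$\Pi_l(z,t)\le \Pi_l(h,z,t)\le \Pi_l(z,t+1),$$ and $$E^l(z,s)=s\int_0^\infty e^{-st}\,\Pi_l(h,z,t)\,dt,$$ $$s\int_0^\infty e^{-st}\,\Pi_l(z,t)\,dt\le E^l(z,s)\le s\int_0^\infty e^{-st}\,\Pi_l(z,t+1)\,dt.$$
   Context: Let $\{S_l\}$ be a degenerating family of hyperbolic Riemann surfaces of genus $g$ with one puncture, parametrized by $l$ near $0\in\mathbf{R}^{6g-4}$. For each $l$, $\Gamma_l$ is a Fuchsian group with $S_l\simeq H/\Gamma_l$, where $H$ is the upper half plane with hyperbolic distance $d(\cdot,\cdot)$; $\Gamma_l$ contains $z\mapsto z+1$, and $\Gamma_\infty$ is the cyclic group it generates. The Eisenstein series is $E^l(z,s)=\sum_{\delta\in\Gamma_\infty\backslash\Gamma_l}(\operatorname{Im}\delta z)^s$ for $z\in H$, $\operatorname{Re}s>1$. For $z\in H$ and $[\delta]\in\Gamma_\infty\backslash\Gamma_l$, the canonical representative $\hat\delta$ is the unique element of $[\delta]$ with $-\tfrac12\le\operatorname{Re}\hat\delta z<\tfrac12$. Let $h=\{w\in H: -\tfrac12\le\operatorname{Re} w<\tfrac12,\ \operatorname{Im} w=1\}$. For $z$ with $\operatorname{Im} z<1$ define $\Pi_l(h,z,t)=\#\{[\delta]\in\Gamma_\infty\backslash\Gamma_l: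 d(h,\hat\delta z)\le t\}$ and $\Pi_l(z,t)=\#\{[\delta]\in\Gamma_\infty\backslash\Gamma_l: d(i,\hat\delta z)\le t\}$. *)

From HB Require Import structures.
From mathcomp Require Import all_boot all_order all_algebra.
From mathcomp Require Import all_classical all_reals all_analysis.
Set Implicit Arguments. Unset Strict Implicit. Unset Printing Implicit Defensive.
Import Order.TTheory GRing.Theory Num.Theory.
Local Open Scope classical_set_scope.
Local Open Scope ring_scope.

(* Points of C are pairs (Re, Im); the upper half plane H is Im > 0. *)
Definition pt (R : realType) := (R * R)%type.
Definition Hplane (R : realType) : set (pt R) := [set w | 0 < w.2].

Definition arccosh (R : realType) (u : R) : R := ln (u + Num.sqrt (u ^+ 2 - 1)).
Definition hdist (R : realType) (z w : pt R) : R :=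
  arccosh (1 + ((z.1 - w.1) ^+ 2 + (z.2 - w.2) ^+ 2) / (2 * z.2 * w.2)).

Definition hdist_set (R : realType) (A : set (pt R)) (w : pt R) : R :=
  inf [set hdist a w | a in A].

Definition pt_i (R : realType) : pt R := (0, 1).
Definition hseg (R : realType) : set (pt R) :=
  [set w | -(2^-1) <= w.1 /\ w.1 < 2^-1 /\ w.2 = 1].

(* Moebius action of a 2x2 real matrix g = (a b; c d) on z = x + i y:
   g z = (a z + b) / (c z + d), written out in real and imaginary parts. *)
Definition moeb (R : realType) (g : 'M[R]_2) (z : pt R) : pt R :=
  let a := g ord0 ord0 in let b := g ord0 ord_max in
  let c := g ord_max ord0 in let d := g ord_max ord_max in
  let x := z.1 in let y := z.2 in
  let den := (c * x + d) ^+ 2 + (c * y) ^+ 2 in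
  (((a * x + b) * (c * x + d) + a * c * y ^+ 2) / den, y / den).

(* Fuchsian group, represented by its full preimage Gam in SL(2,R)
   (so Gam contains -1; the corresponding subgroup of PSL(2,R) is Gam/{+-1}). *)
Definition is_fuchsian (R : realType) (Gam : set 'M[R]_2) : Prop :=
  [/\ (forall g, Gam g -> \det g = 1),
      Gam (1%:M) /\ Gam (- (1%:M)),
      (forall g k, Gam g -> Gam k -> Gam (g *m k)),
      (forall g, Gam g -> Gam (invmx g)) &
      (* discreteness: only finitely many elements in every bounded set *)
      (forall K : R, finite_set [set g | Gam g /\ forall i j, `|g i j| <= K])].

(* torsion free (no elliptic elements): the quotient is a hyperbolic surface *)
Definition torsion_free (R : realType) (Gam : set 'M[R]_2) : Prop :=
  forall g, Gam g -> g <> 1%:M -> g <> - 1%:M -> 2 <= `|\tr g|.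

Definition transl (R : realType) (n : int) : 'M[R]_2 :=
  \matrix_(i < 2, j < 2)
    (if (i == ord0) && (j == ord_max) then n%:~R else if i == j then 1 else 0).

(* Gamma_infty = <z |-> z+1> (in PSL), i.e. {+- T^n} in SL(2,R) *)
Definition Gam_inf (R : realType) : set 'M[R]_2 :=
  [set g | exists n : int, g = @transl R n \/ g = - @transl R n].

Definition coset_inf (R : realType) (delta : 'M[R]_2) : set 'M[R]_2 :=
  [set g | exists2 t, @Gam_inf R t & g = t *m delta].

Definition cosets (R : realType) (Gam : set 'M[R]_2) : set (set 'M[R]_2) :=
  [set @coset_inf R delta | delta in Gam].

(* the canonical representative hat-delta of the coset C w.r.t. z satisfies
   -1/2 <= Re (hat-delta z) < 1/2; it is unique up to sign, so its action
   hat-delta z is well defined. *)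
Definition canon_prop (R : realType) (C : set 'M[R]_2) (z : pt R)
  (P : pt R -> Prop) : Prop :=
  exists2 g, C g & (-(2^-1) <= (moeb g z).1 /\ (moeb g z).1 < 2^-1) /\ P (moeb g z).

(* counting functions, with values in \bar R (+oo if infinite) *)
Definition Pi_h (R : realType) (Gam : set 'M[R]_2) (z : pt R) (t : R) : \bar R :=
  (\esum_(C in cosets Gam `&` [set C | canon_prop C z (fun w => (hdist_set (@hseg R) w <= t)%R)])
     1)%E.
Definition Pi_i (R : realType) (Gam : set 'M[R]_2) (z : pt R) (t : R) : \bar R :=
  (\esum_(C in cosets Gam `&` [set C | canon_prop C z (fun w => (hdist (@pt_i R) w <= t)%R)])
     1)%E.

Definition eisenstein (R : realType) (Gam : set 'M[R]_2) (z : pt R) (s : R) : \bar R :=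
  (\esum_(C in cosets Gam)
     ((moeb (xget (1%:M) C) z).2 `^ s)%:E)%E.

From mathcomp Require Import all_boot all_order all_algebra.
From mathcomp Require Import all_classical all_reals all_analysis.
From mathcomp Require Import measurable_realfun ring lra.

(* For a coset [C] of [Gamma_infty] let [w_C] be the point [\hat\delta z] of the
   strip [-1/2 <= Re w < 1/2] and [y_C = Im w_C], which lies in (0, 1] by hypothesis.
   The distance from [w_C] to the horocyclic segment [h] is exactly [- ln y_C]
   (attained straight above [w_C]), and the distance from [w_C] to [i] lies between
   [- ln y_C] and [- ln y_C + 1], because [|Re w_C| <= 1/2].  Both counting functions
   are therefore sublevel counts of per-coset quantities, which gives the comparison
   of [Pi_h] and [Pi_i].  Since [y_C ^ s = e^(- s (- ln y_C))] and
   [s \int_0^oo e^(-st) 1_(b <= t) dt = e^(- s max(b, 0))], Tonelli over the countable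
   set of cosets turns each Laplace transform into a sum over cosets, giving the
   identity for [Pi_h] and, by monotonicity, the two bounds for [Pi_i]. *)
Import Order.TTheory GRing.Theory Num.Theory.
Import numFieldNormedType.Exports.
Set Implicit Arguments. Unset Strict Implicit. Unset Printing Implicit Defensive.
Local Open Scope classical_set_scope.
Local Open Scope ring_scope.

Section countable_esum.
Context (R : realType) (T : pointedType) (A : set T).
Hypothesis cA : countable A.

Lemma countable_esum_nneseries :
  exists (P : pred nat) (g : nat -> T), (forall n, P n -> A (g n)) /\
    forall h : T -> \bar R, (forall C, A C -> 0 <= h C)%E ->
      (\esum_(C in A) h C = \sum_(n <oo | P n) h (g n))%E.
Proof.
have /countable_bijP[Q /card_esym/card_set_bijP[g gbij]] := cA.
exists (fun n => `[< Q n >]), g; split=> [n /asboolP|h h0].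
  exact: set_bij_homo gbij n.
rewrite (@reindex_esum _ _ _ _ _ _ h gbij) nneseries_esum.
  by congr esum; apply/seteqP; split=> n /asboolP.
by move=> n /asboolP /(set_bij_homo gbij); exact: h0.
Qed.

Lemma ge0_esumZl (c : R) (h : T -> \bar R) : 0 <= c ->
  (forall C, A C -> 0 <= h C)%E ->
  (\esum_(C in A) (c%:E * h C) = c%:E * \esum_(C in A) h C)%E.
Proof.
move=> c0 h0; have [P [g [Pg esumE]]] := countable_esum_nneseries.
rewrite !esumE //; last by move=> C AC; rewrite mule_ge0 ?lee_fin ?h0.
by rewrite nneseriesZl // => n /Pg; exact: h0.
Qed.

Lemma ge0_integral_esum d (X : measurableType d) (mu : {measure set X -> \bar R})
    (D : set X) (F : T -> X -> \bar R) :
  measurable D ->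
  (forall C, A C -> measurable_fun D (F C)) ->
  (forall C x, A C -> D x -> 0 <= F C x)%E ->
  (\int[mu]_(x in D) (\esum_(C in A) F C x) =
   \esum_(C in A) \int[mu]_(x in D) F C x)%E.
Proof.
move=> mD mF F0; have [P [g [Pg esumE]]] := countable_esum_nneseries.
pose G n : X -> \bar R := if P n then F (g n) else cst 0%E.
rewrite esumE; last by move=> C AC; apply: integral_ge0 => x; exact: F0.
transitivity (\int[mu]_(x in D) \sum_(n <oo) G n x)%E.
  apply: eq_integral => x /set_mem Dx; rewrite esumE; last by move=> C AC; exact: F0.
  by rewrite eseries_mkcond; apply: eq_eseriesr => n _; rewrite /G; case: ifPn.
rewrite integral_nneseries //.
- rewrite [RHS]eseries_mkcond; apply: eq_eseriesr => n _; rewrite /G.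
  by case: ifPn => // _; rewrite integral0.
- by move=> n; rewrite /G; case: ifPn => Pn; [exact/mF/Pg | exact: measurable_cst].
- by move=> n x Dx; rewrite /G; case: ifPn => // Pn; exact: F0 (Pg n Pn) Dx.
Qed.

End countable_esum.

Definition sublevel_count (R : realType) (T : choiceType) (A : set T) (a : T -> R)
    (t : R) : \bar R :=
  (\esum_(C in A `&` [set C | (a C <= t)%R]) 1)%E.

Section sublevel_count.
Context (R : realType) (T : choiceType) (A : set T).
Implicit Types (a b : T -> R) (s t : R).

Lemma le_sublevel_count a b t : (forall C, A C -> a C <= b C) ->
  (sublevel_count A b t <= sublevel_count A a t)%E.
Proof.
move=> ab; rewrite /sublevel_count !esum_mkcondr; apply: le_esum => C AC.
case: ifPn => [/set_mem /= bt|_]; last by case: ifPn.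
by rewrite ifT //; apply/mem_set/(le_trans (ab C AC)).
Qed.

Lemma sublevel_countDr a t c :
  sublevel_count A a (t + c) = sublevel_count A (fun C => a C - c) t.
Proof.
by congr esum; apply/seteqP; split=> C [AC /=]; rewrite lerBlDr.
Qed.

Lemma le_esum_expN_max a b s : 0 <= s ->
  (forall C, A C -> a C <= b C) ->
  (\esum_(C in A) (expR (- (s * Num.max (b C) 0)))%:E <=
   \esum_(C in A) (expR (- (s * Num.max (a C) 0)))%:E)%E.
Proof.
move=> s0 ab; apply: le_esum => C AC.
by rewrite lee_fin ler_expR lerN2 ler_wpM2l // le_max2 ?ab.
Qed.

End sublevel_count.

Section laplace.
Context (R : realType).
Notation mu := (@lebesgue_measure R).
Local Notation nonneg := [set t : R | 0 <= t].

Lemma set_ge_itv (b : R) : [set t | b <= t] = `[b, +oo[%classic.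
Proof. by apply/seteqP; split => x /=; rewrite in_itv /= andbT. Qed.

Lemma measurable_set_ge (b : R) : measurable [set t : R | b <= t].
Proof. by rewrite set_ge_itv; exact: measurable_itv. Qed.

Lemma measurable_expNM_indic_ge (s b : R) :
  measurable_fun setT (fun t => (expR (- (s * t)) * \1_[set t | b <= t] t)%:E).
Proof.
apply/measurable_EFinP; apply: measurable_funM; last first.
  by apply: measurable_indic; exact: measurable_set_ge.
apply: continuous_measurable_fun => x.
apply: continuous_comp; last exact: continuous_expR.
by apply: continuousN; apply: continuousM => //; exact: cst_continuous.
Qed.

Lemma laplace_indic_ge (s b : R) : 0 < s ->
  (s%:E * \int[mu]_(t in nonneg) (expR (- (s * t)) * \1_[set t | b <= t] t)%:E =
   (expR (- (s * Num.max b 0)))%:E)%E.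
Proof.
move=> s0; set c := Num.max b 0.
have c0 : 0 <= c by rewrite le_max lexx orbT.
transitivity (\int[mu]_(x in `[c, +oo[) (exponential_pdf s x)%:E)%E.
  rewrite -ge0_integralZl_EFin //; first last.
  - exact: ltW.
  - by apply: measurable_funTS; exact: measurable_expNM_indic_ge.
  - exact: measurable_set_ge.
  have -> : `[c, +oo[%classic = nonneg `&` [set t | b <= t].
    apply/seteqP; split => x /=; rewrite in_itv /= andbT /c ge_max; first by move=> /andP[].
    by move=> [-> ->].
  rewrite integral_mkcondr; apply: eq_integral => x /set_mem /= x0.
  rewrite patchE indicE mem_setE /=; case: ifPn => bx.
    by rewrite mulr1 exponential_pdfE // mulNr.
  by rewrite mulr0 mule0.
rewrite (@ge0_continuous_FTC2y _ _ (fun x => - (expR (- s * x))) _ 0) //.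
- by rewrite EFinN oppeK add0e mulNr.
- by move=> x _; apply: exponential_pdf_ge0; exact: ltW.
- apply: (@continuous_subspaceW R^o _ _ [set` `[0, +oo[%R]).
    by apply: subset_itvr; rewrite bnd_simp.
  exact: within_continuous_exponential_pdf.
- rewrite -oppr0; apply: cvgN.
  rewrite (_ : (fun x => expR (- s * x)) = (fun z => expR (- z)) \o *%R s); last first.
    by apply: eq_fun => x; rewrite mulNr.
  apply: (@cvg_comp _ _ _ _ _ _ (pinfty_nbhs R)); last exact: cvgr_expR.
  exact: gt0_cvgMry.
- have cexpNM : continuous (fun z : R^o => expR (- s * z)).
    move=> z; apply: continuous_comp; last exact: continuous_expR.
    by apply: continuousM => //; apply: (@continuousN _ R^o); exact: cst_continuous.
  by apply: cvgN; apply/cvg_at_right_filter; exact: cexpNM.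
- move=> x; rewrite in_itv /= andbT => cx.
  by apply: derive1_exponential_pdf; rewrite in_itv /= andbT (le_lt_trans c0).
Qed.

Lemma laplace_sublevel_count (T : pointedType) (A : set T) (a : T -> R) (s : R) :
  countable A -> 0 < s ->
  (s%:E * \int[mu]_(t in nonneg) ((expR (- (s * t)))%:E * sublevel_count A a t) =
   \esum_(C in A) (expR (- (s * Num.max (a C) 0)))%:E)%E.
Proof.
move=> cA s0.
have expNM_count t : ((expR (- (s * t)))%:E * sublevel_count A a t =
    \esum_(C in A) (expR (- (s * t)) * \1_[set t | a C <= t] t)%:E)%E.
  rewrite /sublevel_count esum_mkcondr -ge0_esumZl ?expR_ge0 //; last first.
    by move=> C _; case: ifPn.
  apply: eq_esum => C _; rewrite indicE; have [act|act] := boolP (a C <= t).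
    by rewrite !mem_set //= mulr1 mule1.
  by rewrite !memNset //= ?mulr0 ?mule0; apply/negP.
under eq_integral do rewrite expNM_count.
rewrite ge0_integral_esum //; first last.
- by move=> C _; apply: measurable_funTS; exact: measurable_expNM_indic_ge.
- exact: measurable_set_ge.
rewrite -ge0_esumZl ?(ltW s0) //; last by move=> C _; apply: integral_ge0 => t _;
  rewrite lee_fin mulr_ge0 ?expR_ge0.
by apply: eq_esum => C _; exact: laplace_indic_ge.
Qed.

End laplace.

Section hyperbolic_distance.
Variable R : realType.

Lemma le_arccosh (u v : R) : 1 <= u -> u <= v -> arccosh u <= arccosh v.
Proof.
move=> u1 uv; have v1 : 1 <= v by apply: le_trans uv.
have gt0 w : 1 <= w -> 0 < w + Num.sqrt (w ^+ 2 - 1).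
  by move=> w1; rewrite ltr_pwDl ?sqrtr_ge0 // (lt_le_trans ltr01).
rewrite /arccosh ler_ln ?posrE ?gt0 // lerD // ler_wsqrtr // lerB //.
by rewrite ler_pXn2r // nnegrE (le_trans ler01).
Qed.

(* [(1 + y^2) / (2 y)] is [cosh (ln y)] *)
Lemma arccosh_cosh_ln (y : R) : 0 < y -> y <= 1 ->
  arccosh ((1 + y ^+ 2) / (2 * y)) = - ln y.
Proof.
move=> y0 y1; rewrite /arccosh.
have -> : ((1 + y ^+ 2) / (2 * y)) ^+ 2 - 1 = ((1 - y ^+ 2) / (2 * y)) ^+ 2.
  by field; rewrite gt_eqF.
rewrite sqrtr_sqr ger0_norm; last by apply: divr_ge0; nra.
have -> : (1 + y ^+ 2) / (2 * y) + (1 - y ^+ 2) / (2 * y) = y^-1.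
  by field; rewrite gt_eqF.
by rewrite lnV // posrE.
Qed.

Lemma hdist_horocycle_ge (a w : pt R) : a.2 = 1 -> 0 < w.2 -> w.2 <= 1 ->
  - ln w.2 <= hdist a w.
Proof.
move=> a2 y0 y1; rewrite /hdist a2 -arccosh_cosh_ln //.
set y := w.2.
have e : (1 + y ^+ 2) / (2 * y) = 1 + (1 - y) ^+ 2 / (2 * 1 * y).
  by field; rewrite gt_eqF.
apply: le_arccosh; rewrite e.
  by rewrite lerDl divr_ge0 ?sqr_ge0 // mulr_ge0 // ?ltW.
rewrite lerD2l; apply: ler_wpM2r; first by rewrite invr_ge0; nra.
by rewrite -[X in X <= _]add0r lerD2r sqr_ge0.
Qed.

Lemma hdist_horocycle_vertical (w : pt R) : 0 < w.2 -> w.2 <= 1 ->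
  hdist (w.1, 1) w = - ln w.2.
Proof.
move=> y0 y1; rewrite /hdist /= subrr expr0n /= add0r -arccosh_cosh_ln //.
by congr arccosh; field; rewrite gt_eqF.
Qed.

Lemma hdist_set_hseg (w : pt R) : 0 < w.2 -> w.2 <= 1 ->
  -(2^-1) <= w.1 -> w.1 < 2^-1 -> hdist_set (@hseg R) w = - ln w.2.
Proof.
move=> y0 y1 xl xr.
have lb : lbound [set hdist a w | a in @hseg R] (- ln w.2).
  by move=> _ [a [_ [_ a2]] <-]; exact: hdist_horocycle_ge.
have attained : [set hdist a w | a in @hseg R] (- ln w.2).
  by exists (w.1, 1); rewrite ?hdist_horocycle_vertical.
apply/eqP; rewrite eq_le; apply/andP; split.
  by apply: ge_inf => //; exists (- ln w.2).
by apply: lb_le_inf => //; exists (- ln w.2).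
Qed.

Lemma hdist_i_le (w : pt R) : 0 < w.2 -> w.2 <= 1 ->
  -(2^-1) <= w.1 -> w.1 < 2^-1 -> hdist (@pt_i R) w <= - ln w.2 + 1.
Proof.
move=> y0 y1 xl xr; rewrite /hdist /pt_i /=.
set y := w.2; set x := w.1; set u := 1 + _.
have uE : u = (1 + x ^+ 2 + y ^+ 2) / (2 * y) by rewrite /u; field; rewrite gt_eqF.
have u1 : 1 <= u.
  by rewrite /u lerDl divr_ge0 ?addr_ge0 ?sqr_ge0 // mulr_ge0 ?mulr1 // ?ltW.
(* [e^(d(i, w))] is at most [2 / y], and [ln 2 <= 1] *)
have expd_le : u + Num.sqrt (u ^+ 2 - 1) <= 2 / y.
  have B0 : 0 <= 2 / y - u.
    have -> : 2 / y - u = (3 - x ^+ 2 - y ^+ 2) / (2 * y).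
      by rewrite uE; field; rewrite gt_eqF.
    by apply: divr_ge0; nra.
  rewrite -lerBrDl -[X in _ <= X]ger0_norm // -sqrtr_sqr ler_wsqrtr // -subr_ge0.
  have -> : (2 / y - u) ^+ 2 - (u ^+ 2 - 1) = (8 - 8 * x ^+ 2 - 4 * y ^+ 2) / (4 * y ^+ 2).
    by rewrite uE; field; rewrite gt_eqF.
  by apply: divr_ge0; nra.
rewrite /arccosh (le_trans (_ : _ <= ln (2 / y))) //.
  rewrite ler_ln ?posrE ?divr_gt0 //.
  by rewrite ltr_pwDl ?sqrtr_ge0 // (lt_le_trans ltr01).
have ln2 : ln (1 + 1 : R) <= 1 by apply: le_ln1Dx; lra.
rewrite ln_div ?posrE //; lra.
Qed.

End hyperbolic_distance.

Lemma det_mx2 (T : comNzRingType) (g : 'M[T]_2) :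
  \det g = g ord0 ord0 * g ord_max ord_max - g ord0 ord_max * g ord_max ord0.
Proof.
rewrite (expand_det_row _ ord0) !big_ord_recl big_ord0 /cofactor !det_mx11 !mxE /=.
have -> : lift ord0 (ord0 : 'I_1) = ord_max :> 'I_2 by apply: val_inj.
have -> : lift ord_max (ord0 : 'I_1) = ord0 :> 'I_2 by apply: val_inj.
by rewrite /= expr0 expr1; ring.
Qed.

Section moebius.
Variable R : realType.
Implicit Types (g : 'M[R]_2) (z : pt R).


Lemma moeb_den_gt0 g z : \det g = 1 -> 0 < z.2 ->
  0 < (g ord_max ord0 * z.1 + g ord_max ord_max) ^+ 2 + (g ord_max ord0 * z.2) ^+ 2.
Proof.
rewrite det_mx2; set c := g ord_max ord0; set d := g ord_max ord_max => dg y0.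
case: (eqVneq c 0) => [c0|c0]; last first.
  by rewrite ltr_pwDr ?sqr_ge0 // exprn_even_gt0 // mulf_neq0 // gt_eqF.
rewrite c0 !mul0r add0r expr0n /= addr0 exprn_even_gt0 //.
apply/eqP => d0; move: dg; rewrite c0 d0 !mulr0 subr0 => /eqP.
by rewrite eq_sym oner_eq0.
Qed.

Lemma moebN g z : moeb (- g) z = moeb g z.
Proof. by rewrite /moeb !mxE; congr (_ / _, _ / _); ring. Qed.

Lemma transl_mulmx (n : int) g : @transl R n *m g =
  \matrix_(i, j) (if i == ord0 then g ord0 j + n%:~R * g ord_max j else g ord_max j).
Proof.
apply/matrixP => i j; rewrite !mxE !big_ord_recl big_ord0 !mxE /=.
have -> : lift ord0 (ord0 : 'I_1) = ord_max :> 'I_2 by apply: val_inj.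
by case: i => [[|[|//]]] Hi /=; rewrite ?mul1r ?mul0r ?add0r addr0.
Qed.

Lemma moeb_transl (n : int) g z : \det g = 1 -> 0 < z.2 ->
  moeb (@transl R n *m g) z = ((moeb g z).1 + n%:~R, (moeb g z).2).
Proof.
move=> dg y0; have := moeb_den_gt0 dg y0.
rewrite /moeb transl_mulmx !mxE /= => den0.
by congr (_, _); field; rewrite gt_eqF.
Qed.

Lemma moeb_Gam_inf t g z : Gam_inf t -> \det g = 1 -> 0 < z.2 ->
  exists n : int, moeb (t *m g) z = ((moeb g z).1 + n%:~R, (moeb g z).2).
Proof.
move=> [n [->|->]] dg y0; exists n; first exact: moeb_transl.
by rewrite mulNmx moebN; exact: moeb_transl.
Qed.

End moebius.

Section canonical_representative.
Variable R : realType.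
Implicit Types (g : 'M[R]_2) (z p : pt R).

Definition wrap p : pt R := (p.1 - (Num.floor (p.1 + 2^-1))%:~R, p.2).

(* the paper's [\hat\delta z] for the coset [C], computed from any representative *)
Definition canon_point (C : set 'M[R]_2) z : pt R := wrap (moeb (xget 1%:M C) z).

Lemma wrap_range p : -(2^-1) <= (wrap p).1 /\ (wrap p).1 < 2^-1.
Proof.
have := floor_le (p.1 + 2^-1); have := floorD1_gt (p.1 + 2^-1).
by rewrite intrD /wrap /=; split; lra.
Qed.

Lemma wrap_shift p (n : int) : wrap (p.1 + n%:~R, p.2) = wrap p.
Proof.
rewrite /wrap /= [p.1 + _ + 2^-1]addrAC floorDrz ?intr_int // intrKfloor intrD.
by congr (_, _); ring.
Qed.

Lemma wrap_id p : -(2^-1) <= p.1 -> p.1 < 2^-1 -> wrap p = p.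
Proof.
move=> pl pr; rewrite /wrap (@floor_def _ _ 0); last by rewrite /= add0r; lra.
by rewrite subr0; case: p {pl pr}.
Qed.

Lemma canon_prop_coset g z (P : pt R -> Prop) : \det g = 1 -> 0 < z.2 ->
  canon_prop (coset_inf g) z P <-> P (wrap (moeb g z)).
Proof.
move=> dg y0; split.
  move=> [_ [t tG ->]]; have [n ->] := moeb_Gam_inf tG dg y0.
  by move=> [[pl pr] HP]; rewrite -(wrap_shift _ n) wrap_id.
move=> HP; pose n := - Num.floor ((moeb g z).1 + 2^-1).
exists (@transl R n *m g); first by exists (@transl R n) => //; exists n; left.
by rewrite moeb_transl // intrN; split; first exact: wrap_range.
Qed.

Lemma canon_point_coset g z : \det g = 1 -> 0 < z.2 ->
  canon_point (coset_inf g) z = wrap (moeb g z).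
Proof.
move=> dg y0; have : coset_inf g (xget 1%:M (coset_inf g)).
  by apply: xgetPex; exists (@transl R 0 *m g); exists (@transl R 0) => //; exists 0; left.
by rewrite /canon_point => -[t tG ->]; have [n ->] := moeb_Gam_inf tG dg y0; exact: wrap_shift.
Qed.

End canonical_representative.

Lemma countable_cosets (R : realType) (Gam : set 'M[R]_2) : is_fuchsian Gam -> countable (cosets Gam).
Proof.
move=> [_ _ _ _ discrete]; apply: (sub_countable (card_image_le _ _)).
pose ball_mx (n : nat) := [set g | Gam g /\ forall i j, `|g i j| <= n%:R].
have : Gam `<=` \bigcup_(n in [set: nat]) ball_mx n.
  move=> g Gg; pose K := \sum_(i < 2) \sum_(j < 2) `|g i j|.
  exists (Num.truncn K).+1 => //; split => // i j; apply: le_trans (ltW (truncnS_gt K)).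
  rewrite /K (bigD1 i) //= (bigD1 j) //= -addrA lerDl.
  by rewrite addr_ge0 ?sumr_ge0 // => *; rewrite sumr_ge0.
move/subset_card_le/sub_countable; apply.
by apply: bigcup_countable => // n _; exact/finite_set_countable/discrete.
Qed.

Section cusp.
Variables (R : realType) (Gam : set 'M[R]_2) (z : pt R).
Hypotheses (Gam_det : forall g, Gam g -> \det g = 1) (z_im_gt0 : 0 < z.2).
Hypothesis Gam_im_le1 : forall g, Gam g -> (moeb g z).2 <= 1.

Lemma canon_prop_cosets C (P : pt R -> Prop) :
  cosets Gam C -> canon_prop C z P <-> P (canon_point C z).
Proof.
by move=> [g /[dup] /Gam_det dg Gg <-]; rewrite canon_point_coset //; exact: canon_prop_coset.
Qed.

Lemma canon_point_in_strip C : cosets Gam C ->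
  let w := canon_point C z in [/\ 0 < w.2, w.2 <= 1, -(2^-1) <= w.1 & w.1 < 2^-1].
Proof.
move=> [g /[dup] /Gam_det dg Gg <-]; rewrite canon_point_coset //=.
have [wl wr] := wrap_range (moeb g z); split => //; last exact: Gam_im_le1.
by apply: divr_gt0 => //; exact: moeb_den_gt0 dg z_im_gt0.
Qed.

Lemma canon_count_sublevel (Q : pt R -> R) (a : set 'M[R]_2 -> R) t :
  (forall C, cosets Gam C -> Q (canon_point C z) = a C) ->
  (\esum_(C in cosets Gam `&` [set C | canon_prop C z (fun w => (Q w <= t)%R)]) 1)%E =
  sublevel_count (cosets Gam) a t.
Proof.
move=> Qa; congr esum; apply/seteqP; split=> C [cC] /=.
  by rewrite -Qa // => /(canon_prop_cosets _ cC).
by rewrite -Qa // => HC; split => //; apply/(canon_prop_cosets _ cC).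
Qed.

Lemma Pi_hE t :
  Pi_h Gam z t = sublevel_count (cosets Gam) (fun C => - ln (canon_point C z).2) t.
Proof.
apply: canon_count_sublevel => C /canon_point_in_strip [y0 y1 xl xr].
exact: hdist_set_hseg.
Qed.

Lemma Pi_iE t :
  Pi_i Gam z t = sublevel_count (cosets Gam) (fun C => hdist (@pt_i R) (canon_point C z)) t.
Proof. exact: canon_count_sublevel. Qed.

Lemma eisensteinE s : eisenstein Gam z s =
  (\esum_(C in cosets Gam) (expR (- (s * Num.max (- ln (canon_point C z).2) 0)))%:E)%E.
Proof.
apply: eq_esum => C /canon_point_in_strip [y0 y1 _ _].
by rewrite max_l ?oppr_ge0 ?ln_le0 // /powR gt_eqF //= mulrN opprK.
Qed.

Lemma hdist_i_canon_point C : cosets Gam C ->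
  - ln (canon_point C z).2 <= hdist (@pt_i R) (canon_point C z) <= - ln (canon_point C z).2 + 1.
Proof.
move=> /canon_point_in_strip [y0 y1 xl xr].
by rewrite hdist_horocycle_ge ?hdist_i_le.
Qed.

End cusp.

Theorem proposition2p2 (R : realType) (Gam : set 'M[R]_2) (z : pt R) (s : R) :
  is_fuchsian Gam ->
  torsion_free Gam ->
  Gam (@transl R 1) ->
  (forall g, Gam g -> g ord_max ord0 = 0 -> @Gam_inf R g) ->
  1 < s ->
  Hplane z -> z.2 < 1 ->
  (forall g, Gam g -> (moeb g z).2 <= 1) ->
  (forall t : R, (Pi_i Gam z t <= Pi_h Gam z t)%E /\
                 (Pi_h Gam z t <= Pi_i Gam z (t + 1))%E) /\
  eisenstein Gam z s =
    (s%:E * \int[@lebesgue_measure R]_(t in [set t : R | (0 <= t)%R])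
               ((expR (- (s * t))%R)%:E * Pi_h Gam z t))%E /\
  (s%:E * \int[@lebesgue_measure R]_(t in [set t : R | (0 <= t)%R])
             ((expR (- (s * t))%R)%:E * Pi_i Gam z t) <= eisenstein Gam z s)%E /\
  (eisenstein Gam z s <=
     s%:E * \int[@lebesgue_measure R]_(t in [set t : R | (0 <= t)%R])
             ((expR (- (s * t))%R)%:E * Pi_i Gam z (t + 1)))%E.
Proof.
move=> fuchsian _ _ _ s_gt1 z_im_gt0 _ Gam_im_le1.
have [Gam_det _ _ _ _] := fuchsian.
have s_gt0 : 0 < s by apply: lt_trans s_gt1.
have cosets_countable := countable_cosets fuchsian.
have Pi_hE := Pi_hE Gam_det z_im_gt0 Gam_im_le1.
have Pi_iE := Pi_iE Gam_det z_im_gt0.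
have horo_i C := hdist_i_canon_point Gam_det z_im_gt0 Gam_im_le1 C.
rewrite eisensteinE //; split; [|split; [|split]].
- move=> t; rewrite Pi_hE !Pi_iE sublevel_countDr.
  by split; apply: le_sublevel_count => C /horo_i /andP[]; rewrite // lerBlDr.
- by under eq_integral do rewrite Pi_hE; rewrite laplace_sublevel_count.
- under eq_integral do rewrite Pi_iE; rewrite laplace_sublevel_count //.
  by apply: le_esum_expN_max => [|C /horo_i /andP[]//]; exact: ltW.
- under eq_integral do rewrite Pi_iE sublevel_countDr; rewrite laplace_sublevel_count //.
  by apply: le_esum_expN_max => [|C /horo_i /andP[_]]; [exact: ltW | rewrite lerBlDr].
Qed.
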